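(* Let $\mathcal{B}$ be a Boolean control network. If $\mathcal{B}$ is online observable, then $\mathcal{B}$ satisfies Type-I observability.
   Context: $\mathbb{B}=\{0,1\}$. A BCN has inputs $\mathcal{I}=\mathbb{B}^\ell$, states $\mathcal{S}=\mathbb{B}^m$, outputs $\mathcal{O}=\mathbb{B}^n$ and updating rules $\sigma:\mathcal{I}\times\mathcal{S}\to\mathcal{S}$, $\rho:\mathcal{S}\to\mathcal{O}$, with $\mathsf{s}(t+1)=\sigma(\mathsf{i}(t),\mathsf{s}(t))$, $\mathsf{o}(t)=\rho(\mathsf{s}(t))$. For a state $\mathsf{s}$ and input sequence $\mathsf{I}=\mathsf{i}(0)\ldots\mathsf{i}(t)$, $H^{[0,t]}(\mathsf{s},\mathsf{I})=\mathsf{o}(0)\ldots\mathsf{o}(t+1)$ is the output sequence of the run with $\mathsf{s}(0)=\mathsf{s}$. Type-I observability: for every state $\mathsf{s}$ there exists an input sequence $\mathsf{I}=\mathsf{i}(0)\ldots\mathsf{i}(t)$ such that $H^{[0,t]}(\mathsf{s}',\mathsf{I})\ne H^{[0,t]}(\mathsf{s},\mathsf{I})$ for all states $\mathsf{s}'\ne\mathsf{s}$. Online observability: with $\varepsilon$ denoting empty input/output, let $\xi(\mathsf{i},\mathsf{s})=\sigma(\mathsf{i},\mathsf{s})$ for $\mathsf{i}\ne\varepsilon$, $\xi(\varepsilon,\mathsf{s})=\mathsf{s}$; for $\mathsf{S}\subseteq\mathcal{S}$, $\zeta(\mathsf{S},\mathsf{i},\mathsf{o})=\{\xi(\mathsf{i},\mathsf{s}):\mathsf{s}\in\mathsf{S},\rho(\xi(\mathsf{i},\mathsf{s}))=\mathsf{o}\}$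 if $\mathsf{o}\ne\varepsilon$ and $\zeta(\mathsf{S},\mathsf{i},\varepsilon)=\{\xi(\mathsf{i},\mathsf{s}):\mathsf{s}\in\mathsf{S}\}$. For nonempty $\mathsf{S}$: $P_0(\mathsf{S})$ iff $|\mathsf{S}|=1$; $P_{n+1}(\mathsf{S})$ iff $|\mathsf{S}|=1$ or there is $\mathsf{i}\in\mathcal{I}$ with $|\zeta(\mathsf{S},\mathsf{i},\varepsilon)|=|\mathsf{S}|$ such that every nonempty $\zeta(\mathsf{S},\mathsf{i},\mathsf{o})$, $\mathsf{o}\in\mathcal{O}$, satisfies $P_n$. $\Gamma(\mathsf{S})$ is the least $n$ with $P_n(\mathsf{S})$, or $\infty$ if none. The BCN is online observable if $\Gamma(\zeta(\mathcal{S},\varepsilon,\mathsf{o}))\ne\infty$ for every $\mathsf{o}\in\mathcal{O}$ with $\zeta(\mathcal{S},\varepsilon,\mathsf{o})\ne\emptyset$. *)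

From mathcomp Require Import all_boot.
Set Implicit Arguments. Unset Strict Implicit. Unset Printing Implicit Defensive.

(* A BCN with inputs B^l, states B^m, outputs B^n, given by
   sigma : inputs -> states -> states and rho : states -> outputs.
   Elements of B^k are represented as k.-tuple bool. *)
Notation bvec k := (k.-tuple bool).

Fixpoint bcn_run (l m : nat) (sigma : bvec l -> bvec m -> bvec m)
    (s : bvec m) (I : seq (bvec l)) : seq (bvec m) :=
  match I with
  | [::] => [:: s]
  | i :: I' => s :: bcn_run sigma (sigma i s) I'
  end.

Definition bcn_H (l m n : nat) (sigma : bvec l -> bvec m -> bvec m)
    (rho : bvec m -> bvec n) (s : bvec m) (I : seq (bvec l)) : seq (bvec n) :=
  map rho (bcn_run sigma s I).

(* Type-I observability (input sequences i(0)...i(t) are nonempty, t >= 0). *)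
Definition typeI_observable (l m n : nat) (sigma : bvec l -> bvec m -> bvec m)
    (rho : bvec m -> bvec n) : Prop :=
  forall s : bvec m, exists I : seq (bvec l),
    I <> [::] /\
    forall s' : bvec m, s' <> s -> bcn_H sigma rho s' I <> bcn_H sigma rho s I.

(* epsilon is modelled by None. *)
Definition bcn_xi (l m : nat) (sigma : bvec l -> bvec m -> bvec m)
    (i : option (bvec l)) (s : bvec m) : bvec m :=
  if i is Some i' then sigma i' s else s.

Definition bcn_zeta (l m n : nat) (sigma : bvec l -> bvec m -> bvec m)
    (rho : bvec m -> bvec n) (S : {set bvec m}) (i : option (bvec l))
    (o : option (bvec n)) : {set bvec m} :=
  match o with
  | Some o' => [set bcn_xi sigma i s | s in S & rho (bcn_xi sigma i s) == o']
  | None => [set bcn_xi sigma i s | s in S]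
  end.

(* P_k(S) (meaningful for nonempty S). *)
Fixpoint bcn_P (l m n : nat) (sigma : bvec l -> bvec m -> bvec m)
    (rho : bvec m -> bvec n) (k : nat) (S : {set bvec m}) : bool :=
  match k with
  | 0 => #|S| == 1
  | k'.+1 =>
      (#|S| == 1) ||
      [exists i : bvec l,
         (#|bcn_zeta sigma rho S (Some i) None| == #|S|) &&
         [forall o : bvec n,
            (bcn_zeta sigma rho S (Some i) (Some o) != set0) ==>
            bcn_P sigma rho k' (bcn_zeta sigma rho S (Some i) (Some o))]]
  end.

(* Gamma(S) <> infinity  iff  P_k(S) holds for some k. *)
Definition Gamma_finite (l m n : nat) (sigma : bvec l -> bvec m -> bvec m)
    (rho : bvec m -> bvec n) (S : {set bvec m}) : Prop :=
  exists k : nat, bcn_P sigma rho k S.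

Definition online_observable (l m n : nat) (sigma : bvec l -> bvec m -> bvec m)
    (rho : bvec m -> bvec n) : Prop :=
  forall o : bvec n,
    bcn_zeta sigma rho [set: bvec m] None (Some o) != set0 ->
    Gamma_finite sigma rho (bcn_zeta sigma rho [set: bvec m] None (Some o)).

From mathcomp Require Import all_boot.

(* A proof of P_k(S) is an adaptive experiment: an input injective on S, then,
   for each possible next output, an experiment for the resulting class.
   Following it along the run from s yields an input sequence whose outputs
   separate s from every other state of S, by induction on k.  Applied to the
   output class of s, this separates s from all states with the same initial
   output; the others already differ at time 0.  Appending one input makes the
   sequence nonempty, since output sequences of longer inputs extend shorter
   ones. *)

Section Observability.

Set Implicit Arguments.
Unset Strict Implicit.

Variables (l m n : nat) (sigma : bvec l -> bvec m -> bvec m)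
  (rho : bvec m -> bvec n).

Local Notation H := (bcn_H sigma rho).
Local Notation zeta := (bcn_zeta sigma rho).

Definition distinguishing_in (S : {set bvec m}) (s : bvec m)
    (I : seq (bvec l)) : Prop :=
  forall s', s' \in S -> s' <> s -> H s' I <> H s I.

Lemma bcn_H_cons s i I : H s (i :: I) = rho s :: H (sigma i s) I.
Proof. by []. Qed.

Lemma bcn_H_eq_head s s' (I : seq (bvec l)) :
  H s' I = H s I -> rho s' = rho s.
Proof. by case: I => [|i I] [->]. Qed.

Lemma bcn_H_take s (I J : seq (bvec l)) :
  H s I = take (size I).+1 (H s (I ++ J)).
Proof.
rewrite /bcn_H -map_take; congr map.
elim: I s => [|i I IH] s /=; first by case: J => [|j J]; rewrite /= ?take0.
by rewrite -IH.
Qed.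

Lemma distinguishing_in_catr (S : {set bvec m}) s (I J : seq (bvec l)) :
  distinguishing_in S s I -> distinguishing_in S s (I ++ J).
Proof.
move=> dI s' s'S s's E; apply: (dI s' s'S s's).
by rewrite (bcn_H_take s' I J) (bcn_H_take s I J) E.
Qed.

Lemma distinguishing_in_card1 (S : {set bvec m}) s (I : seq (bvec l)) :
  #|S| == 1 -> s \in S -> distinguishing_in S s I.
Proof. by case/cards1P=> x -> /set1P -> s' /set1P ->. Qed.

Lemma mem_zeta_output (S : {set bvec m}) i o s :
  s \in S -> rho (sigma i s) = o -> sigma i s \in zeta S (Some i) (Some o).
Proof. by move=> sS <-; apply/imsetP; exists s; rewrite // inE sS /=. Qed.

Lemma mem_zeta_init o s :
  (s \in zeta [set: bvec m] None (Some o)) = (rho s == o).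
Proof.
rewrite /bcn_zeta /=; apply/imsetP/eqP => [[s' + ->] | <-].
  by rewrite !inE => /eqP.
by exists s; rewrite ?inE ?eqxx.
Qed.

Lemma bcn_P_distinguishing k S s :
  bcn_P sigma rho k S -> s \in S -> exists I, distinguishing_in S s I.
Proof.
elim: k S s => [|k IH] S s /=.
  by move=> S1 sS; exists [::]; apply: distinguishing_in_card1.
case/orP=> [S1 sS | /existsP[i /andP[/imset_injP inj_i /forallP step]] sS].
  by exists [::]; apply: distinguishing_in_card1.
set o := rho (sigma i s).
have Zs : sigma i s \in zeta S (Some i) (Some o) by apply: mem_zeta_output.
have Z_neq0 : zeta S (Some i) (Some o) != set0.
  by apply/set0Pn; exists (sigma i s).
have [I dI] := IH _ _ (implyP (step o) Z_neq0) Zs.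
exists (i :: I) => s' s'S s's; rewrite !bcn_H_cons => -[_ E].
apply: dI (mem_zeta_output s'S (bcn_H_eq_head E)) _ E.
by move=> /(inj_i _ _ s'S sS).
Qed.

End Observability.

Theorem lemma3 (l m n : nat) (sigma : l.-tuple bool -> m.-tuple bool -> m.-tuple bool)
    (rho : m.-tuple bool -> n.-tuple bool) :
  online_observable sigma rho -> typeI_observable sigma rho.
Proof.
move=> online s.
set S := bcn_zeta sigma rho [set: bvec m] None (Some (rho s)).
have sS : s \in S by rewrite mem_zeta_init.
have S_neq0 : S != set0 by apply/set0Pn; exists s.
have [k Pk] := online _ S_neq0.
have [I dI] := bcn_P_distinguishing Pk sS.
exists (I ++ [:: nseq_tuple l false]); split; first by case: I {dI}.
move=> s' s's E.
have s'S : s' \in S by rewrite mem_zeta_init (bcn_H_eq_head E).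
exact: distinguishing_in_catr dI s' s'S s's E.
Qed.
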